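(* Let $\mathcal{D}$ be a basic action theory of the situation calculus and let $\langle \mathcal{D}, \varphi, s\rangle$ be a causal setting. Then $$\mathcal{D}\models \forall a,a',ts,ts'.\; \mathit{CausesDir}(a,ts,\varphi,s)\land \mathit{CausesDir}(a',ts',\varphi,s)\supset a=a'\land ts=ts'.$$
   Context: Situation calculus: $S_0$ is the initial situation and $do(a,s)$ is the situation resulting from performing action $a$ in $s$. $s\sqsubset s'$ means $s'$ is reachable from $s$ by performing one or more actions, and $s\sqsubseteq s'$ abbreviates $s\sqsubset s'\lor s=s'$. $\mathit{Poss}(a,s)$ means $a$ is executable in $s$; $\mathit{Exec}(s)$ abbreviates $\forall a',s'.\,do(a',s')\sqsubseteq s\supset \mathit{Poss}(a',s')$ (in the temporal variant additionally $\mathit{start}(s')\le \mathit{time}(a')$). $s<s'$ abbreviates $s\sqsubset s'\land \mathit{Exec}(s')$, and $s\le s'$ abbreviates $s<s'\lor s=s'$. Situations carry time-stamps: $\mathit{timeStamp}(S_0)=0$ and $\mathit{timeStamp}(do(a,s))=\mathit{timeStamp}(s)+1$. For a situation-suppressed formula $\varphi$, $\varphi[s]$ denotes $\varphi$ with situation argument $s$ restored in all fluents. A causal setting $\langle\mathcal{D},\varphi,s\rangle$ consists of a ground situation $s$ and a situation-suppressed formula $\varphi$ with $\mathcal{D}\models \mathit{Exec}(s)\land\neg\varphi[S_0]\land\varphi[s]$. Direct (primary) cause: $$\mathit{CausesDir}(a,ts,\varphi,s)\doteq \exists s_a.\;\mathit{timeStamp}(s_a)=ts\land (S_0<do(a,s_a)\le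 s)\land\neg\varphi[s_a]\land\forall s'.(do(a,s_a)\le s'\le s\supset\varphi[s']).$$ *)

(* In every model of the foundational axioms Sigma of a basic action theory,
   situations form a tree isomorphic to finite action sequences rooted at S0;
   we therefore represent situations over an arbitrary action domain A by the
   inductive type [sit A].  The interpretation of Poss and of the
   situation-suppressed formula phi (a predicate on situations) are arbitrary,
   and "D |= ..." becomes quantification over all such interpretations. *)

Set Implicit Arguments.

Inductive sit (A : Type) : Type :=
| S0 : sit A
| do : A -> sit A -> sit A.
Arguments S0 {A}.

Section SitCalc.
Variable A : Type.
Variable Poss : A -> sit A -> Prop.

Inductive sqsub : sit A -> sit A -> Prop :=
| sqsub_do : forall a s, sqsub s (do a s)
| sqsub_step : forall a s s', sqsub s s' -> sqsub s (do a s').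

Definition sqsubeq (s s' : sit A) : Prop := sqsub s s' \/ s = s'.

Definition Exec (s : sit A) : Prop :=
  forall a' s', sqsubeq (do a' s') s -> Poss a' s'.

Definition slt (s s' : sit A) : Prop := sqsub s s' /\ Exec s'.
Definition sle (s s' : sit A) : Prop := slt s s' \/ s = s'.

Fixpoint timeStamp (s : sit A) : nat :=
  match s with S0 => 0 | do _ s' => S (timeStamp s') end.

Definition causal_setting (phi : sit A -> Prop) (s : sit A) : Prop :=
  Exec s /\ ~ phi S0 /\ phi s.

Definition CausesDir (a : A) (ts : nat) (phi : sit A -> Prop) (s : sit A) : Prop :=
  exists sa, timeStamp sa = ts /\ slt S0 (do a sa) /\ sle (do a sa) s /\
    ~ phi sa /\ forall s', sle (do a sa) s' -> sle s' s -> phi s'.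
End SitCalc.

Set Implicit Arguments.

(* Both situations [do a sa] and [do a' sa'] are prefixes of [s], hence one is a
   prefix of the other.  If, say, [do a sa] came strictly before [do a' sa'], then
   [sa'] would lie in the window between [do a sa] and the executable [s], where
   the first cause keeps [phi] true; but the second cause needs [~ phi sa'].  So
   the two situations coincide, which forces [a = a'] and [sa = sa'], hence equal
   time-stamps. *)

Section Prefixes.
Variable A : Type.
Variable Poss : A -> sit A -> Prop.

Lemma sqsub_trans (x y z : sit A) : sqsub x y -> sqsub y z -> sqsub x z.
Proof. intros Hxy Hyz; induction Hyz; constructor; auto. Qed.

Lemma sqsubeq_trans (x y z : sit A) : sqsubeq x y -> sqsubeq y z -> sqsubeq x z.
Proof.
  unfold sqsubeq; intros [Hxy | <-] [Hyz | <-]; auto.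
  left; eapply sqsub_trans; eauto.
Qed.

Lemma sqsub_do_inv (x y : sit A) (b : A) : sqsub x (do b y) -> sqsubeq x y.
Proof. intros H; inversion H; subst; unfold sqsubeq; auto. Qed.

Lemma sqsub_sqsubeq_do (x y : sit A) (b : A) : sqsubeq (do b x) y -> sqsub x y.
Proof.
  intros [H | <-]; [eapply sqsub_trans; [constructor | exact H] | constructor].
Qed.

Lemma sqsubeq_total (s x y : sit A) :
  sqsubeq x s -> sqsubeq y s -> sqsub x y \/ x = y \/ sqsub y x.
Proof.
  revert x y; induction s as [| b s IH]; intros x y Hx Hy.
  - destruct Hx as [Hx | Hx], Hy as [Hy | Hy];
      solve [inversion Hx | inversion Hy | subst; auto].
  - destruct Hx as [Hx | Hx], Hy as [Hy | Hy]; subst.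
    + exact (IH x y (sqsub_do_inv Hx) (sqsub_do_inv Hy)).
    + left; exact Hx.
    + right; right; exact Hy.
    + auto.
Qed.

Lemma Exec_sqsubeq (x y : sit A) : sqsubeq x y -> Exec Poss y -> Exec Poss x.
Proof. intros Hxy Hy a s' H; apply Hy; eapply sqsubeq_trans; eauto. Qed.

Lemma sle_sqsubeq (x y : sit A) : sle Poss x y -> sqsubeq x y.
Proof. intros [[H _] | H]; unfold sqsubeq; auto. Qed.

Lemma sle_of_prefix (s x y : sit A) :
  Exec Poss s -> sqsubeq x y -> sqsubeq y s -> sle Poss x y.
Proof.
  intros Hs [Hxy | <-] Hys; [left | right]; auto.
  split; [exact Hxy | exact (Exec_sqsubeq Hys Hs)].
Qed.

Lemma direct_causes_not_strictly_ordered (phi : sit A -> Prop) (s sa sa' : sit A)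
    (a a' : A) :
  Exec Poss s -> sle Poss (do a' sa') s -> ~ phi sa' ->
  (forall s', sle Poss (do a sa) s' -> sle Poss s' s -> phi s') ->
  ~ sqsub (do a sa) (do a' sa').
Proof.
  intros Hs Hle Hnphi Hwindow Hlt.
  assert (Hsa's : sqsubeq sa' s)
    by (left; exact (sqsub_sqsubeq_do (sle_sqsubeq Hle))).
  apply Hnphi, Hwindow.
  - exact (sle_of_prefix Hs (sqsub_do_inv Hlt) Hsa's).
  - exact (sle_of_prefix Hs Hsa's (or_intror eq_refl)).
Qed.

End Prefixes.

Theorem lemma5p1 (A : Type) (Poss : A -> sit A -> Prop)
  (phi : sit A -> Prop) (s : sit A) :
  causal_setting Poss phi s ->
  forall (a a' : A) (ts ts' : nat),
    CausesDir Poss a ts phi s /\ CausesDir Poss a' ts' phi s ->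
    a = a' /\ ts = ts'.
Proof.
  intros [Hs _] a a' ts ts'
    [[sa [<- [_ [Hle [Hnphi Hwindow]]]]] [sa' [<- [_ [Hle' [Hnphi' Hwindow']]]]]].
  destruct (sqsubeq_total (sle_sqsubeq Hle) (sle_sqsubeq Hle')) as [H | [H | H]].
  - exfalso; exact (direct_causes_not_strictly_ordered phi Hs Hle' Hnphi' Hwindow H).
  - injection H as -> ->; auto.
  - exfalso; exact (direct_causes_not_strictly_ordered phi Hs Hle Hnphi Hwindow' H).
Qed.
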